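(* Let $\mathbb{K}$ be a field of characteristic $2$, let $(A,\cdot,\{-,-\},(-)^{\{2\}})$ be a restricted Poisson algebra, let $k\ge1$ and let $(A^t_k,\cdot,\mu_{(k)},\omega_{(k)})$ be a formal deformation of order $k$ of $A$, with $\mu_{(k)}=\{-,-\}+\sum_{i=1}^kt^i\mu_i$ and $\omega_{(k)}=(-)^{\{2\}}+\sum_{i=1}^kt^i\omega_i$. Define, for $x,y,z\in A$, $\mathrm{obs}^{(1)}_{k+1}(x,y,z)=\sum_{i=1}^k\big(\mu_i(x,\mu_{k+1-i}(y,z))+\mu_i(y,\mu_{k+1-i}(z,x))+\mu_i(z,\mu_{k+1-i}(x,y))\big)$ and $\mathrm{obs}^{(2)}_{k+1}(x,y)=\sum_{i=1}^k\big(\mu_i(y,\omega_{k+1-i}(x))+\mu_i(x,\mu_{k+1-i}(x,y))\big)$. Then $(\mathrm{obs}^{(1)}_{k+1},\mathrm{obs}^{(2)}_{k+1})\in C^3_{\rm PA}(A)$.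
   Context: $\mathbb{K}$ has characteristic $2$. Restricted Poisson algebra: commutative associative $(A,\cdot)$ with Lie bracket satisfying $\{ab,c\}=a\{b,c\}+b\{a,c\}$, and a map $(-)^{\{2\}}$ with $(\lambda x)^{\{2\}}=\lambda^2x^{\{2\}}$, $\mathrm{ad}_{x^{\{2\}}}=\mathrm{ad}_x^2$, $(x+y)^{\{2\}}=x^{\{2\}}+y^{\{2\}}+\{x,y\}$, $(xy)^{\{2\}}=x^2y^{\{2\}}+y^2x^{\{2\}}+xy\{x,y\}$. $\mathfrak{X}^n(A)$: alternating $n$-linear maps $A^n\to A$ that are derivations of $\cdot$ in each argument. For $n\ge2$, $C^n_{\rm PA}(A)$: pairs $(\varphi,\omega)$ with $\varphi\in\mathfrak{X}^n(A)$ and $\omega:A\times A^{n-2}\to A$ alternating multilinear in the last $n-2$ arguments, such that for $z=(z_2,..,z_{n-1})$: $\omega(\lambda x,z)=\lambda^2\omega(x,z)$, $\omega(x+y,z)=\omega(x,z)+\omega(y,z)+\varphi(x,y,z)$, $\omega(xy,z)=x^2\omega(y,z)+y^2\omega(x,z)+xy\varphi(x,y,z)$, $\omega(x,..,z_iz_i',..)=z_i\omega(x,..,z_i',..)+z_i'\omega(x,..,z_i,..)$. (For $n=2$, $\omega:A\to A$.) $\mathbb{K}^t_k=\mathbb{K}[t]/(t^{k+1})$, $A^t_k=A\otimes\mathbb{K}^t_k$. A formal deformation of order $k$: all $(\mu_i,\omega_i)\in C^2_{\rm PA}(A)$ and $(A^t_k,\mu_{(k)},\omega_{(k)})$ is a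 restricted Lie algebra over $\mathbb{K}^t_k$ ($\mu$ extended bilinearly, $\omega$ extended by $\omega(\lambda X)=\lambda^2\omega(X)$, $\omega(X+Y)=\omega(X)+\omega(Y)+\mu(X,Y)$). *)

From HB Require Import structures.
From mathcomp Require Import all_boot all_order all_algebra.
Set Implicit Arguments. Unset Strict Implicit. Unset Printing Implicit Defensive.
Import GRing.Theory.
Local Open Scope ring_scope.

(* Conventions: A is a K-vector space ([lmodType K]) carrying an explicit
   multiplication [mul] (commutative, associative, K-bilinear; no unit assumed),
   a bracket [br] and a map [sq] = (-)^{2}.  x^2 means [mul x x]. *)

Section RPA.
Variables (K : fieldType) (A : lmodType K).
Local Notation op2 := (A -> A -> A).

Definition is_comm_assoc (mul : op2) : Prop :=
  [/\ forall (a : K) x y z, mul (a *: x + y) z = a *: mul x z + mul y z,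
      forall x y, mul x y = mul y x &
      forall x y z, mul x (mul y z) = mul (mul x y) z].

Definition is_poisson (mul br : op2) : Prop :=
  is_comm_assoc mul /\
  [/\ forall (a : K) x y z, br (a *: x + y) z = a *: br x z + br y z,
      forall (a : K) x y z, br x (a *: y + z) = a *: br x y + br x z,
      forall x, br x x = 0,
      forall x y z, br x (br y z) + br y (br z x) + br z (br x y) = 0 &
      forall a b c, br (mul a b) c = mul a (br b c) + mul b (br a c)].

Definition is_restricted_poisson (mul br : op2) (sq : A -> A) : Prop :=
  is_poisson mul br /\
  [/\ forall (a : K) x, sq (a *: x) = a ^+ 2 *: sq x,
      forall x y, br (sq x) y = br x (br x y),
      forall x y, sq (x + y) = sq x + sq y + br x y &
      forall x y, sq (mul x y) =
        mul (mul x x) (sq y) + mul (mul y y) (sq x) + mul (mul x y) (br x y)].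

Definition is_X2 (mul : op2) (phi : op2) : Prop :=
  [/\ forall (a : K) x y z, phi (a *: x + y) z = a *: phi x z + phi y z,
      forall (a : K) x y z, phi x (a *: y + z) = a *: phi x y + phi x z,
      forall x, phi x x = 0,
      forall a b y, phi (mul a b) y = mul a (phi b y) + mul b (phi a y) &
      forall x a b, phi x (mul a b) = mul a (phi x b) + mul b (phi x a)].

Definition is_X3 (mul : op2) (phi : A -> A -> A -> A) : Prop :=
  [/\ forall (a : K) x x' y z, phi (a *: x + x') y z = a *: phi x y z + phi x' y z,
      forall (a : K) x y y' z, phi x (a *: y + y') z = a *: phi x y z + phi x y' z,
      forall (a : K) x y z z', phi x y (a *: z + z') = a *: phi x y z + phi x y z',
      [/\ forall x z, phi x x z = 0, forall x y, phi x y x = 0 &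
          forall x y, phi x y y = 0] &
      [/\ forall a b y z, phi (mul a b) y z = mul a (phi b y z) + mul b (phi a y z),
      forall x a b z, phi x (mul a b) z = mul a (phi x b z) + mul b (phi x a z) &
      forall x y a b, phi x y (mul a b) = mul a (phi x y b) + mul b (phi x y a)]].

Definition is_C2PA (mul : op2) (phi : op2) (om : A -> A) : Prop :=
  is_X2 mul phi /\
  [/\ forall (a : K) x, om (a *: x) = a ^+ 2 *: om x,
      forall x y, om (x + y) = om x + om y + phi x y &
      forall x y, om (mul x y) =
        mul (mul x x) (om y) + mul (mul y y) (om x) + mul (mul x y) (phi x y)].

Definition is_C3PA (mul : op2) (phi : A -> A -> A -> A) (om : A -> A -> A) : Prop :=
  is_X3 mul phi /\
  [/\ forall (a : K) x z, om (a *: x) z = a ^+ 2 *: om x z,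
      forall x y z, om (x + y) z = om x z + om y z + phi x y z,
      forall x y z, om (mul x y) z =
        mul (mul x x) (om y z) + mul (mul y y) (om x z) + mul (mul x y) (phi x y z),
      forall (b : K) x z z', om x (b *: z + z') = b *: om x z + om x z' &
      forall x z z', om x (mul z z') = mul z (om x z') + mul z' (om x z)].

(* ---- A^t_k = A ⊗ K[t]/(t^(k+1)), elements represented by their coefficient
   sequences X : nat -> A (X n = coefficient of t^n); only n <= k matter. *)

Definition teq (k : nat) (X Y : nat -> A) : Prop := forall n, (n <= k)%N -> X n = Y n.

Definition tadd (X Y : nat -> A) : nat -> A := fun n => X n + Y n.

(* scalars of K^t_k represented by polynomials p (modulo t^(k+1)) *)
Definition tscale (p : {poly K}) (X : nat -> A) : nat -> A :=
  fun n => \sum_(j < n.+1) p`_j *: X (n - j)%N.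

Definition defM (br : op2) (mu : nat -> op2) (i : nat) : op2 :=
  if i == 0%N then br else mu i.
Definition defW (sq : A -> A) (om : nat -> A -> A) (i : nat) : A -> A :=
  if i == 0%N then sq else om i.

(* mu_(k) = sum_i t^i M_i, extended K^t_k-bilinearly *)
Definition tbr (M : nat -> op2) (X Y : nat -> A) : nat -> A :=
  fun n => \sum_(i < n.+1) \sum_(a < n.+1) \sum_(b < n.+1 | (i + a + b == n)%N)
             M i (X a) (Y b).

(* omega_(k) = sum_i t^i W_i, extended by omega(lam X) = lam^2 omega(X) and
   omega(X+Y) = omega(X)+omega(Y)+mu(X,Y):
   omega(sum_a t^a x_a) = sum_a t^(2a) omega(x_a) + sum_(a<b) t^(a+b) mu(x_a,x_b) *)
Definition tsq (M : nat -> op2) (W : nat -> A -> A) (X : nat -> A) : nat -> A :=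
  fun n => \sum_(i < n.+1) \sum_(a < n.+1 | (i + a.*2 == n)%N) W i (X a)
         + \sum_(i < n.+1) \sum_(a < n.+1) \sum_(b < n.+1 | (a < b)%N && (i + a + b == n)%N)
             M i (X a) (X b).

Definition is_restricted_lie_tk (k : nat)
    (L : (nat -> A) -> (nat -> A) -> (nat -> A)) (P : (nat -> A) -> (nat -> A)) : Prop :=
  [/\ forall p X Y Z, teq k (L (tadd (tscale p X) Y) Z) (tadd (tscale p (L X Z)) (L Y Z)),
      forall p X Y Z, teq k (L X (tadd (tscale p Y) Z)) (tadd (tscale p (L X Y)) (L X Z)),
      forall X, teq k (L X X) (fun=> 0),
      forall X Y Z, teq k (tadd (tadd (L X (L Y Z)) (L Y (L Z X))) (L Z (L X Y))) (fun=> 0) &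
      [/\ forall p X, teq k (P (tscale p X)) (tscale (p * p) (P X)),
      forall X Y, teq k (P (tadd X Y)) (tadd (tadd (P X) (P Y)) (L X Y)) &
      forall X Y, teq k (L (P X) Y) (L X (L X Y))]].

Definition formal_deformation (k : nat) (mul br : op2) (sq : A -> A)
    (mu : nat -> op2) (om : nat -> A -> A) : Prop :=
  (forall i, (1 <= i <= k)%N -> is_C2PA mul (mu i) (om i)) /\
  is_restricted_lie_tk k (tbr (defM br mu)) (tsq (defM br mu) (defW sq om)).

Definition obs1 (k : nat) (mu : nat -> op2) (x y z : A) : A :=
  \sum_(1 <= i < k.+1)
     (mu i x (mu (k.+1 - i)%N y z) + mu i y (mu (k.+1 - i)%N z x)
      + mu i z (mu (k.+1 - i)%N x y)).

Definition obs2 (k : nat) (mu : nat -> op2) (om : nat -> A -> A) (x y : A) : A :=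
  \sum_(1 <= i < k.+1)
     (mu i y (om (k.+1 - i)%N x) + mu i x (mu (k.+1 - i)%N x y)).

End RPA.

From HB Require Import structures.
From mathcomp Require Import all_boot all_order all_algebra zify.
Set Implicit Arguments. Unset Strict Implicit. Unset Printing Implicit Defensive.
Import GRing.Theory.
Local Open Scope ring_scope.

(* The theorem is a statement about cochains only: it uses that each
   (mu_i, om_i) lies in C^2_PA(A), never the deformation equations.  Writing
   obs1 = sum_i circ mu_i mu_(k+1-i) and obs2 = sum_i circ_sq mu_i mu_(k+1-i)
   om_(k+1-i), every axiom of C^3_PA holds summand-wise up to a defect of the
   form D(mu_i, mu_j) + D(mu_j, mu_i).  Summed over the antidiagonal i + j = k+1
   these defects appear twice each, hence cancel in characteristic 2. *)

Section ExponentTwo.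
Variable V : zmodType.
Hypothesis addxx : forall v : V, v + v = 0.

Lemma addr0_eq (u v : V) : u + v = 0 -> u = v.
Proof. by move=> uv0; rewrite -[u]addr0 -(addxx v) addrA uv0 add0r. Qed.

Lemma mulrn_even (v : V) n : ~~ odd n -> v *+ n = 0.
Proof.
move=> /negbTE even_n.
by rewrite -(odd_double_half n) even_n add0n -muln2 mulrnA mulr2n addxx.
Qed.

Lemma sum_even_count (I : eqType) (s : seq I) (F : I -> V) :
  all (fun i => ~~ odd (count_mem i s)) s -> \sum_(i <- s) F i = 0.
Proof.
move=> /allP even_s; rewrite -big_undup_iterop_count big1_seq // => i.
by rewrite mem_undup => /even_s ?; rewrite Monoid.iteropE iter_addr_0 mulrn_even.
Qed.

Inductive zexpr := ZAtom of nat | ZAdd of zexpr & zexpr | ZZero.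

Fixpoint zeval (env : seq V) (e : zexpr) : V :=
  match e with
  | ZAtom n => env`_n
  | ZAdd e1 e2 => zeval env e1 + zeval env e2
  | ZZero => 0
  end.

Fixpoint zatoms (e : zexpr) : seq nat :=
  match e with
  | ZAtom n => [:: n]
  | ZAdd e1 e2 => zatoms e1 ++ zatoms e2
  | ZZero => [::]
  end.

Lemma zevalE env e : zeval env e = \sum_(n <- zatoms e) env`_n.
Proof.
elim: e => [n | e1 IH1 e2 IH2 |] /=; first by rewrite big_seq1.
  by rewrite big_cat IH1 IH2.
by rewrite big_nil.
Qed.

Lemma zeval_eq env e1 e2 :
  let s := zatoms e1 ++ zatoms e2 in all (fun n => ~~ odd (count_mem n s)) s ->
  zeval env e1 = zeval env e2.
Proof. by move=> s even_s; apply: addr0_eq; rewrite !zevalE -big_cat sum_even_count. Qed.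

End ExponentTwo.

(* Proves an equality between sums in a group of exponent 2 by comparing the
   parities of the multiplicities of each summand; summands are compared
   syntactically, so products must be normalised beforehand. *)
Ltac zmem t l :=
  lazymatch l with
  | nil => constr:(false)
  | cons t _ => constr:(true)
  | cons _ ?l' => zmem t l'
  end.
Ltac zindex t l :=
  lazymatch l with
  | cons t _ => constr:(O)
  | cons _ ?l' => let n := zindex t l' in constr:(S n)
  end.
Ltac zcollect t env :=
  lazymatch t with
  | @GRing.add _ ?a ?b => let env := zcollect a env in zcollect b env
  | @GRing.zero _ => env
  | _ => lazymatch zmem t env with true => env | false => constr:(cons t env) end
  end.
Ltac zreify t env :=
  lazymatch t with
  | @GRing.add _ ?a ?b =>
      let ea := zreify a env in let eb := zreify b env in constr:(ZAdd ea eb)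
  | @GRing.zero _ => constr:(ZZero)
  | _ => let n := zindex t env in constr:(ZAtom n)
  end.
Ltac char2_abel addxx :=
  lazymatch goal with |- @eq ?T ?L ?R =>
    let env := zcollect L (@nil T) in let env := zcollect R env in
    let eL := zreify L env in let eR := zreify R env in
    change (zeval env eL = zeval env eR);
    apply: (zeval_eq addxx); vm_compute; reflexivity
  end.

Section LinearMap.
Variables (K : fieldType) (U V : lmodType K) (f : U -> V).
Hypothesis f_lin : linear f.
Let lf : {linear U -> V} := HB.pack f (GRing.isLinear.Build K U V *:%R f f_lin).

Lemma linD x y : f (x + y) = f x + f y. Proof. exact: (raddfD lf). Qed.
Lemma lin0 : f 0 = 0. Proof. exact: (raddf0 lf). Qed.
Lemma linZ a x : f (a *: x) = a *: f x. Proof. exact: (@linearZZ _ _ _ lf a x). Qed.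
Lemma lin_sum (I : Type) (r : seq I) (P : pred I) (F : I -> U) :
  f (\sum_(i <- r | P i) F i) = \sum_(i <- r | P i) f (F i).
Proof. exact: (linear_sum lf). Qed.

End LinearMap.

Lemma pchar2_addxx (K : fieldType) (A : lmodType K) :
  2%N \in [pchar K] -> forall v : A, v + v = 0.
Proof. by move=> char2 v; rewrite -mulr2n -scaler_nat (pcharf0 char2) scale0r. Qed.

Section Cochains.
Variables (K : fieldType) (A : lmodType K) (mul : A -> A -> A).
Hypothesis mulP : is_comm_assoc mul.
Hypothesis addxx : forall v : A, v + v = 0.

Lemma mulC x y : mul x y = mul y x. Proof. by case: mulP. Qed.
Lemma mulA x y z : mul x (mul y z) = mul (mul x y) z. Proof. by case: mulP. Qed.
Lemma mulCA x y z : mul x (mul y z) = mul y (mul x z).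
Proof. by rewrite mulA (mulC x) -mulA. Qed.

Lemma mul_linl z : linear (mul^~ z).
Proof. by case: mulP => mul_lin _ _ a x y; apply: mul_lin. Qed.
Lemma mul_linr z : linear (mul z).
Proof. by move=> a x y; rewrite !(mulC z); apply: mul_linl. Qed.

Lemma mulDl x y z : mul (x + y) z = mul x z + mul y z.
Proof. exact: (linD (mul_linl z) x y). Qed.
Lemma mulDr x y z : mul z (x + y) = mul z x + mul z y.
Proof. exact: (linD (mul_linr z) x y). Qed.
Lemma mulZl a x z : mul (a *: x) z = a *: mul x z.
Proof. exact: (linZ (mul_linl z) a x). Qed.
Lemma mulZr a x z : mul z (a *: x) = a *: mul z x.
Proof. exact: (linZ (mul_linr z) a x). Qed.
Lemma mulr0 z : mul z 0 = 0. Proof. exact: (lin0 (mul_linr z)). Qed.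
Lemma mul_sumr a (I : Type) (r : seq I) (P : pred I) (F : I -> A) :
  mul a (\sum_(i <- r | P i) F i) = \sum_(i <- r | P i) mul a (F i).
Proof. exact: (lin_sum (mul_linr a)). Qed.

Section Biderivation.
Variable phi : A -> A -> A.
Hypothesis phiP : is_X2 mul phi.

Lemma bider_linl z : linear (phi^~ z).
Proof. by case: phiP => phi_lin _ _ _ _ a x y; apply: phi_lin. Qed.
Lemma bider_linr z : linear (phi z).
Proof. by case: phiP => _ phi_lin _ _ _ a x y; apply: phi_lin. Qed.

Lemma biderDl x y z : phi (x + y) z = phi x z + phi y z.
Proof. exact: (linD (bider_linl z) x y). Qed.
Lemma biderDr x y z : phi z (x + y) = phi z x + phi z y.
Proof. exact: (linD (bider_linr z) x y). Qed.
Lemma biderZl a x z : phi (a *: x) z = a *: phi x z.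
Proof. exact: (linZ (bider_linl z) a x). Qed.
Lemma biderZr a x z : phi z (a *: x) = a *: phi z x.
Proof. exact: (linZ (bider_linr z) a x). Qed.
Lemma bider0r z : phi z 0 = 0. Proof. exact: (lin0 (bider_linr z)). Qed.
Lemma biderxx x : phi x x = 0. Proof. by case: phiP. Qed.
Lemma biderMl a b y : phi (mul a b) y = mul a (phi b y) + mul b (phi a y).
Proof. by case: phiP. Qed.
Lemma biderMr x a b : phi x (mul a b) = mul a (phi x b) + mul b (phi x a).
Proof. by case: phiP. Qed.

Lemma biderC x y : phi x y = phi y x.
Proof.
apply: (addr0_eq addxx); have := biderxx (x + y).
by rewrite biderDl !biderDr !biderxx add0r addr0.
Qed.

End Biderivation.

Definition circ (phi psi : A -> A -> A) x y z :=
  phi x (psi y z) + phi y (psi z x) + phi z (psi x y).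
Definition circ_sq (phi psi : A -> A -> A) (om : A -> A) x z :=
  phi z (om x) + phi x (psi x z).

Definition circ_derl_defect (phi psi : A -> A -> A) a b y z :=
  mul (psi z b) (phi y a) + mul (psi z a) (phi y b).
Definition circ_sqM_defect (phi psi : A -> A -> A) x y z :=
  mul x (mul (psi x y) (phi y z)) + mul y (mul (psi x y) (phi x z)).
Definition circ_sq_derr_defect (phi psi : A -> A -> A) x z z' :=
  mul (psi x z') (phi x z).

Lemma circ_cycle phi psi x y z : circ phi psi x y z = circ phi psi y z x.
Proof. by rewrite /circ [RHS]addrC addrA. Qed.

Section CircLemmas.
Variables (phi psi : A -> A -> A) (om : A -> A).
Hypotheses (phiP : is_X2 mul phi) (psiP : is_X2 mul psi).
Hypothesis omZ : forall a x, om (a *: x) = a ^+ 2 *: om x.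
Hypothesis omD : forall x y, om (x + y) = om x + om y + psi x y.
Hypothesis omM : forall x y,
  om (mul x y) = mul (mul x x) (om y) + mul (mul y y) (om x) + mul (mul x y) (psi x y).

Ltac expand :=
  do 3 rewrite ?(biderDl phiP) ?(biderDr phiP) ?(biderDl psiP) ?(biderDr psiP)
  ?(biderZl phiP) ?(biderZr phiP) ?(biderZl psiP) ?(biderZr psiP)
  ?(biderMl phiP) ?(biderMr phiP) ?(biderMl psiP) ?(biderMr psiP)
  ?mulDl ?mulDr ?mulZl ?mulZr ?scalerDr.

Lemma circ_linl a x x' y z :
  circ phi psi (a *: x + x') y z = a *: circ phi psi x y z + circ phi psi x' y z.
Proof. rewrite /circ; expand; char2_abel addxx. Qed.

Lemma circ_alt x z : circ phi psi x x z = 0.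
Proof. by rewrite /circ (biderC psiP z) (biderxx psiP) (bider0r phiP) addr0 addxx. Qed.

Lemma circ_derl a b y z :
  circ phi psi (mul a b) y z = mul a (circ phi psi b y z) + mul b (circ phi psi a y z)
    + (circ_derl_defect phi psi a b y z + circ_derl_defect psi phi a b y z).
Proof.
rewrite /circ /circ_derl_defect; expand.
rewrite [mul (psi b y) _]mulC [mul (psi a y) _]mulC.
rewrite [psi b y](biderC psiP) [psi a y](biderC psiP).
char2_abel addxx.
Qed.

Lemma circ_sqZ a x z : circ_sq phi psi om (a *: x) z = a ^+ 2 *: circ_sq phi psi om x z.
Proof. by rewrite /circ_sq omZ; expand; rewrite scalerA -expr2. Qed.

Lemma circ_sqD x y z : circ_sq phi psi om (x + y) z =
  circ_sq phi psi om x z + circ_sq phi psi om y z + circ phi psi x y z.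
Proof.
rewrite /circ_sq /circ omD; expand.
by rewrite [psi z x](biderC psiP); char2_abel addxx.
Qed.

Lemma circ_sqM x y z : circ_sq phi psi om (mul x y) z =
  mul (mul x x) (circ_sq phi psi om y z) + mul (mul y y) (circ_sq phi psi om x z)
  + mul (mul x y) (circ phi psi x y z)
  + (circ_sqM_defect phi psi x y z + circ_sqM_defect psi phi x y z).
Proof.
rewrite /circ_sq /circ /circ_sqM_defect omM; expand.
rewrite !(biderxx phiP) !mulr0.
rewrite [mul x (mul x _)]mulA [mul y (mul y _)]mulA [mul x (mul y _)]mulA.
rewrite [mul y (mul x _)]mulA (mulC y x).
rewrite [mul (psi y z) (phi y x)]mulC [phi y x](biderC phiP) [mul (psi x z) (phi x y)]mulC.
rewrite [mul (psi x y) (mul x _)]mulCA [mul (psi x y) (mul y _)]mulCA.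
rewrite [phi z y](biderC phiP) [phi z x](biderC phiP) [psi z x](biderC psiP).
char2_abel addxx.
Qed.

Lemma circ_sq_linr b x z z' : circ_sq phi psi om x (b *: z + z') =
  b *: circ_sq phi psi om x z + circ_sq phi psi om x z'.
Proof. rewrite /circ_sq; expand; char2_abel addxx. Qed.

Lemma circ_sq_derr x z z' : circ_sq phi psi om x (mul z z') =
  mul z (circ_sq phi psi om x z') + mul z' (circ_sq phi psi om x z)
  + (circ_sq_derr_defect phi psi x z z' + circ_sq_derr_defect psi phi x z z').
Proof.
rewrite /circ_sq /circ_sq_derr_defect; expand.
rewrite [mul (psi x z) _]mulC; char2_abel addxx.
Qed.

End CircLemmas.

Lemma sum_antidiag_sym (E : nat -> nat -> A) n :
  \sum_(1 <= i < n.+1) (E i (n.+1 - i)%N + E (n.+1 - i)%N i) = 0.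
Proof.
rewrite big_split /= [X in _ + X]big_nat_rev /=.
rewrite [X in _ + X](eq_big_nat _ _ (F2 := fun i => E i (n.+1 - i)%N)) ?addxx //.
by move=> i lt_i; congr E; lia.
Qed.

Lemma eq_sum_antidiag (F G : nat -> A) (E : nat -> nat -> A) n :
  (forall i, (1 <= i < n.+1)%N -> F i = G i + (E i (n.+1 - i)%N + E (n.+1 - i)%N i)) ->
  \sum_(1 <= i < n.+1) F i = \sum_(1 <= i < n.+1) G i.
Proof. by move=> FG; rewrite (eq_big_nat _ _ FG) big_split /= sum_antidiag_sym addr0. Qed.

Section Obstruction.
Variables (k : nat) (mu : nat -> A -> A -> A) (om : nat -> A -> A).
Hypothesis muP : forall i, (1 <= i <= k)%N -> is_C2PA mul (mu i) (om i).

Local Notation o1 := (obs1 k mu).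
Local Notation o2 := (obs2 k mu om).

Lemma mu_pair_C2PA i : (1 <= i < k.+1)%N ->
  is_X2 mul (mu i) /\ is_C2PA mul (mu (k.+1 - i)%N) (om (k.+1 - i)%N).
Proof.
move=> lt_i; have [|phiP _] := muP (i := i); first by lia.
by split=> //; apply: muP; lia.
Qed.

Lemma obs1_cycle x y z : o1 x y z = o1 y z x.
Proof. by apply: eq_bigr => i _; apply: (circ_cycle (mu i)). Qed.

Lemma obs1_linl a x x' y z : o1 (a *: x + x') y z = a *: o1 x y z + o1 x' y z.
Proof.
rewrite /obs1 scaler_sumr -big_split; apply: eq_big_nat => i /mu_pair_C2PA[phiP [psiP _]].
exact: (circ_linl phiP psiP).
Qed.

Lemma obs1_alt x z : o1 x x z = 0.
Proof.
rewrite /obs1 big1_seq // => i; rewrite mem_index_iota => /mu_pair_C2PA[phiP [psiP _]].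
exact: (circ_alt phiP psiP).
Qed.

Lemma obs1_derl a b y z : o1 (mul a b) y z = mul a (o1 b y z) + mul b (o1 a y z).
Proof.
rewrite /obs1 !mul_sumr -big_split.
apply: (eq_sum_antidiag (E := fun i j => circ_derl_defect (mu i) (mu j) a b y z)).
by move=> i /mu_pair_C2PA[phiP [psiP _]]; apply: (circ_derl phiP psiP).
Qed.

Lemma obs2_Z a x z : o2 (a *: x) z = a ^+ 2 *: o2 x z.
Proof.
rewrite /obs2 scaler_sumr; apply: eq_big_nat => i /mu_pair_C2PA[phiP [psiP [omZ _ _]]].
exact: (circ_sqZ phiP psiP omZ).
Qed.

Lemma obs2_D x y z : o2 (x + y) z = o2 x z + o2 y z + o1 x y z.
Proof.
rewrite /obs2 /obs1 -!big_split; apply: eq_big_nat => i /mu_pair_C2PA[phiP [psiP [_ omD _]]].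
exact: (circ_sqD phiP psiP omD).
Qed.

Lemma obs2_M x y z : o2 (mul x y) z =
  mul (mul x x) (o2 y z) + mul (mul y y) (o2 x z) + mul (mul x y) (o1 x y z).
Proof.
rewrite /obs2 /obs1 !mul_sumr -!big_split.
apply: (eq_sum_antidiag (E := fun i j => circ_sqM_defect (mu i) (mu j) x y z)).
by move=> i /mu_pair_C2PA[phiP [psiP [_ _ omM]]]; apply: (circ_sqM phiP psiP omM).
Qed.

Lemma obs2_linr b x z z' : o2 x (b *: z + z') = b *: o2 x z + o2 x z'.
Proof.
rewrite /obs2 scaler_sumr -big_split; apply: eq_big_nat => i /mu_pair_C2PA[phiP [psiP _]].
exact: (circ_sq_linr _ phiP psiP).
Qed.

Lemma obs2_derr x z z' : o2 x (mul z z') = mul z (o2 x z') + mul z' (o2 x z).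
Proof.
rewrite /obs2 !mul_sumr -big_split.
apply: (eq_sum_antidiag (E := fun i j => circ_sq_derr_defect (mu i) (mu j) x z z')).
by move=> i /mu_pair_C2PA[phiP [psiP _]]; apply: (circ_sq_derr _ phiP psiP).
Qed.

Lemma obs_C3PA : is_C3PA mul o1 o2.
Proof.
have o1_cycle2 x y z : o1 x y z = o1 z x y by rewrite 2!obs1_cycle.
split; first split.
- exact: obs1_linl.
- by move=> a x y y' z; rewrite !(obs1_cycle x) obs1_linl.
- by move=> a x y z z'; rewrite !(o1_cycle2 x y) obs1_linl.
- split=> [x z | x y | x y]; first exact: obs1_alt.
    by rewrite o1_cycle2 obs1_alt.
  by rewrite obs1_cycle obs1_alt.
- split=> [a b y z | x a b z | x y a b]; first exact: obs1_derl.
    by rewrite !(obs1_cycle x) obs1_derl.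
  by rewrite !(o1_cycle2 x y) obs1_derl.
split; [exact: obs2_Z | exact: obs2_D | exact: obs2_M | exact: obs2_linr | exact: obs2_derr].
Qed.

End Obstruction.
End Cochains.

Unset Implicit Arguments.

Theorem mainTheorem17 (K : fieldType) (A : lmodType K)
    (mul br : A -> A -> A) (sq : A -> A) (k : nat)
    (mu : nat -> A -> A -> A) (om : nat -> A -> A) :
  2%N \in [pchar K] ->
  is_restricted_poisson mul br sq ->
  (1 <= k)%N ->
  formal_deformation k mul br sq mu om ->
  is_C3PA mul (obs1 k mu) (obs2 k mu om).
Proof.
move=> char2 [[mulP _] _] _ [muP _].
exact: (obs_C3PA mulP (pchar2_addxx char2) muP).
Qed.
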